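(* Let $n,n_1,n_2\in\mathbb{N}^+$ and $p_1,p_2$ satisfy the standing assumptions below, and put $s_2=n/n_2$. Let $G_{l_1+l_2}$ be the two-layer stochastic block model $G(n,n_1,n_2,p_1,p_2)$, and let $G_{l_1+N}$ be the model $G(n,n_1,1,p_1,p_n)$ with $p_n=\frac{s_2-1}{n-1}\,p_2$, i.e. the layer-1 structure (with the same $n_1$ communities and probability $p_1$) plus uniform random noise in which every pair of nodes is additionally joined independently with probability $p_n$ (so that the expected number of noise edges equals the expected number of edges generated by layer 2 in $G_{l_1+l_2}$). Let $Q^{S}_{l_1}$ and $Q^{R}_{l_1}$ denote the (expected) modularity of the ground-truth layer $l_1$ in $G_{l_1+l_2}$ and in $G_{l_1+N}$ respectively. Then $Q^{S}_{l_1}<Q^{R}_{l_1}$.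
   Context: Multi-layer stochastic block model $G(n,n_1,\dots,n_L,p_1,\dots,p_L)$: a random graph on $n$ nodes with $L$ layers. For each layer $l$ the nodes are partitioned into $n_l$ planted communities of size $s_l=n/n_l$; independently for each layer, each pair of distinct nodes in a common community of layer $l$ receives an edge from layer $l$ with probability $p_l$; the graph is the simple union of all generated edges, so a pair of nodes lying in a common community of exactly the layers in a set $T$ is an edge with probability $1-\prod_{l\in T}(1-p_l)$. The partitions of different layers are independent: for any $k\ge 2$ distinct layers $l_1,\dots,l_k$ and any choice of one community from each, the intersection of these communities has $r_{l_1\cdots l_k}=n/(n_{l_1}\cdots n_{l_k})$ nodes (in expectation). Standing assumptions (for the layers of the block model): $n_l\ge 4$, $p_l\in[0.05,1]$, and $n\ge 2\prod_l n_l$. Modularity: for a partition (layer) $l$ of the nodes of a graph with $e$ edges, if community $i$ has $e^i_{ll}$ internal edges, $e^i_{lout}$ edges with exactly one endpoint in it, and total degree $d^i_l=2e^i_{ll}+e^i_{lout}$, then $Q_l=\sum_i\big(\frac{e^i_{ll}}{e}-(\frac{d^i_l}{2e})^2\big)$. In the block model all quantities are replaced by expectations: writing $e_{ll}$, $e_{lout}$ for the expected numbers of internal and outgoing edges of one community of layer $l$ (identical for all communities of the layer), $d_l=2e_{ll}+e_{lout}$ and $e=n_ld_l/2$, the (expected) modularity of layer $l$ is $Q_l=n_l\big[\frac{e_{ll}}{e}-(\frac{d_l}{2e})^2\big]$. *)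

From Stdlib Require Import Reals Lra.
Open Scope R_scope.

(* Two-layer stochastic block model G(n, n1, n2, p1, p2).  All quantities are
   the expectations described in the paper; divisions are real divisions. *)

Definition comm_size (n nl : nat) : R := INR n / INR nl.
(* expected intersection of a layer-1 and a layer-2 community: r12 = n/(n1 n2) *)
Definition inter_size (n n1 n2 : nat) : R := INR n / (INR n1 * INR n2).

(* number of pairs inside one layer-1 community that also share a layer-2
   community: n2 * r12 (r12 - 1) / 2 *)
Definition shared_pairs (n n1 n2 : nat) : R :=
  INR n2 * (inter_size n n1 n2 * (inter_size n n1 n2 - 1) / 2).

(* expected number of internal edges e_{l1 l1} of one layer-1 community:
   pairs sharing only the layer-1 community get probability p1, pairs sharing
   both communities get probability 1-(1-p1)(1-p2). *)
Definition e_in1 (n n1 n2 : nat) (p1 p2 : R) : R :=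
  (comm_size n n1 * (comm_size n n1 - 1) / 2 - shared_pairs n n1 n2) * p1
  + shared_pairs n n1 n2 * (1 - (1 - p1) * (1 - p2)).

(* expected number of outgoing edges e_{l1 out} of one layer-1 community:
   pairs (u in C, v notin C) sharing a layer-2 community, with probability p2. *)
Definition e_out1 (n n1 n2 : nat) (p1 p2 : R) : R :=
  INR n2 * (inter_size n n1 n2 * (comm_size n n2 - inter_size n n1 n2)) * p2.

Definition deg1 (n n1 n2 : nat) (p1 p2 : R) : R :=
  2 * e_in1 n n1 n2 p1 p2 + e_out1 n n1 n2 p1 p2.

Definition total_edges1 (n n1 n2 : nat) (p1 p2 : R) : R :=
  INR n1 * deg1 n n1 n2 p1 p2 / 2.

Definition Q_layer1 (n n1 n2 : nat) (p1 p2 : R) : R :=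
  INR n1 * (e_in1 n n1 n2 p1 p2 / total_edges1 n n1 n2 p1 p2
            - (deg1 n n1 n2 p1 p2 / (2 * total_edges1 n n1 n2 p1 p2)) ^ 2).

Definition noise_prob (n n2 : nat) (p2 : R) : R :=
  (comm_size n n2 - 1) / (INR n - 1) * p2.

From Stdlib Require Import Reals Lra Lia.
Open Scope R_scope.

(* The modularity of layer 1 is [2 e_in / (2 e_in + e_out) - 1/n1], which grows
   with e_in and shrinks with e_out.  With s = n/n1, t = n/n2 and r = n/(n1 n2),
   the noise model spreads the expected layer-2 degree (t-1) p2 of a node over
   all n-1 partners instead of over its t-1 layer-2 partners.  As
   (t-1)/(n-1) < t/n = r/s, a smaller share of it leaves the layer-1 community
   (s p_n < r p2), so a larger share stays inside: e_in grows, e_out shrinks. *)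

Lemma Q_layer1_eq (n n1 n2 : nat) (p1 p2 : R) :
  INR n1 <> 0 -> deg1 n n1 n2 p1 p2 <> 0 ->
  Q_layer1 n n1 n2 p1 p2 = 2 * e_in1 n n1 n2 p1 p2 / deg1 n n1 n2 p1 p2 - / INR n1.
Proof.
  intros n1_neq0 deg_neq0.
  unfold Q_layer1, total_edges1.
  field; auto.
Qed.

Lemma internal_fraction_lt (e o e' o' : R) :
  0 < e <= e' -> 0 < o' < o -> 2 * e / (2 * e + o) < 2 * e' / (2 * e' + o').
Proof.
  intros [e_pos e_le] [o'_pos o_gt].
  apply Rmult_lt_reg_r with ((2 * e + o) * (2 * e' + o')); [nra|].
  replace (2 * e / (2 * e + o) * ((2 * e + o) * (2 * e' + o')))
    with (2 * e * (2 * e' + o')) by (field; lra).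
  replace (2 * e' / (2 * e' + o') * ((2 * e + o) * (2 * e' + o')))
    with (2 * e' * (2 * e + o)) by (field; lra).
  nra.
Qed.

Lemma Q_layer1_lt (n n1 n2 n2' : nat) (p1 p2 p1' p2' : R) :
  INR n1 <> 0 ->
  0 < e_in1 n n1 n2 p1 p2 <= e_in1 n n1 n2' p1' p2' ->
  0 < e_out1 n n1 n2' p1' p2' < e_out1 n n1 n2 p1 p2 ->
  Q_layer1 n n1 n2 p1 p2 < Q_layer1 n n1 n2' p1' p2'.
Proof.
  intros n1_neq0 e_le o_lt.
  rewrite !Q_layer1_eq by (unfold deg1; lra || auto).
  apply Rplus_lt_compat_r.
  exact (internal_fraction_lt _ _ _ _ e_le o_lt).
Qed.

Lemma inter_size_1 (n n1 : nat) : inter_size n n1 1 = comm_size n n1.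
Proof. unfold inter_size, comm_size; simpl; now rewrite Rmult_1_r. Qed.

Lemma comm_size_eq (n n1 n2 : nat) :
  INR n1 <> 0 -> INR n2 <> 0 -> comm_size n n1 = INR n2 * inter_size n n1 n2.
Proof. intros; unfold comm_size, inter_size; field; auto. Qed.

Lemma e_in1_eq (n n1 n2 : nat) (p1 p2 : R) :
  INR n1 <> 0 -> INR n2 <> 0 ->
  e_in1 n n1 n2 p1 p2 =
  comm_size n n1 / 2
  * (p1 * (comm_size n n1 - 1) + (1 - p1) * ((inter_size n n1 n2 - 1) * p2)).
Proof.
  intros n1_neq0 n2_neq0.
  unfold e_in1, shared_pairs; rewrite (comm_size_eq n n1 n2) by auto.
  field.
Qed.

Lemma e_out1_eq (n n1 n2 : nat) (p1 p2 : R) :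
  INR n1 <> 0 -> INR n2 <> 0 ->
  e_out1 n n1 n2 p1 p2 =
  comm_size n n1 * (INR n1 - 1) * (inter_size n n1 n2 * p2).
Proof.
  intros n1_neq0 n2_neq0.
  unfold e_out1; rewrite (comm_size_eq n n1 n2), (comm_size_eq n n2 n1) by auto.
  unfold inter_size; field; auto.
Qed.

Lemma noise_prob_balance (n n2 : nat) (p2 : R) :
  INR n <> 1 -> (INR n - 1) * noise_prob n n2 p2 = (comm_size n n2 - 1) * p2.
Proof. intros; unfold noise_prob; field; lra. Qed.

Section NoiseVersusLayer2.

Variables (n n1 n2 : nat) (p1 p2 : R).
Hypotheses (n1_ge2 : (2 <= n1)%nat) (n2_ge2 : (2 <= n2)%nat) (n_ge : (n1 * n2 <= n)%nat).
Hypotheses (p1_pos : 0 < p1) (p1_le1 : p1 <= 1) (p2_pos : 0 < p2).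

Local Notation s := (comm_size n n1).
Local Notation t := (comm_size n n2).
Local Notation r := (inter_size n n1 n2).
Local Notation c := (noise_prob n n2 p2).

Let n1_ge2R : 2 <= INR n1.
Proof. apply (le_INR 2); lia. Qed.

Let n2_ge2R : 2 <= INR n2.
Proof. apply (le_INR 2); lia. Qed.

Let n_eq : INR n = INR n1 * INR n2 * r.
Proof. unfold inter_size; field; lra. Qed.

Let r_ge1 : 1 <= r.
Proof.
  unfold inter_size; rewrite <- mult_INR.
  apply Rmult_le_reg_r with (INR (n1 * n2)); [apply (lt_INR 0); lia|].
  field_simplify; [apply le_INR; lia|].
  apply not_0_INR; lia.
Qed.

Let n_ge4 : 4 <= INR n.
Proof. rewrite n_eq; assert (4 <= INR n1 * INR n2) by nra; nra. Qed.

Let s_eq : s = INR n2 * r.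
Proof. apply comm_size_eq; lra. Qed.

Let s_ge2 : 2 <= s.
Proof. rewrite s_eq; nra. Qed.

Let t_eq : t = INR n1 * r.
Proof. rewrite (comm_size_eq n n2 n1) by lra; unfold inter_size; field; lra. Qed.

Let balance : (INR n - 1) * c = (t - 1) * p2.
Proof. apply noise_prob_balance; lra. Qed.

Let noise_pos : 0 < c.
Proof.
  apply Rmult_lt_reg_l with (INR n - 1); [lra|].
  rewrite Rmult_0_r, balance, t_eq.
  assert (2 <= INR n1 * r) by nra.
  nra.
Qed.

Lemma noise_outside_lt : s * c < r * p2.
Proof.
  apply Rmult_lt_reg_l with (INR n - 1); [nra|].
  replace ((INR n - 1) * (s * c)) with (s * ((INR n - 1) * c)) by ring.
  rewrite balance, s_eq, t_eq, n_eq.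
  assert (0 < r * p2 * (INR n2 - 1)) by (apply Rmult_lt_0_compat; nra).
  nra.
Qed.

Lemma noise_inside_ge : (r - 1) * p2 <= (s - 1) * c.
Proof.
  pose proof noise_outside_lt as outside.
  (* n - s = (n1 - 1) s and t - r = (n1 - 1) r *)
  assert (gap_eq : (s - 1) * c - (r - 1) * p2 = (INR n1 - 1) * (r * p2 - s * c)).
  { rewrite n_eq, t_eq in balance; rewrite s_eq; nra. }
  nra.
Qed.

Lemma e_in1_pos : 0 < e_in1 n n1 n2 p1 p2.
Proof.
  rewrite e_in1_eq by lra.
  apply Rmult_lt_0_compat; [lra|].
  assert (0 <= (1 - p1) * ((r - 1) * p2)) by (apply Rmult_le_pos; nra).
  assert (0 < p1 * (s - 1)) by (apply Rmult_lt_0_compat; lra).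
  lra.
Qed.

Lemma e_in1_le_noise : e_in1 n n1 n2 p1 p2 <= e_in1 n n1 1 p1 c.
Proof.
  rewrite !e_in1_eq, inter_size_1 by (simpl; lra).
  apply Rmult_le_compat_l; [lra|].
  apply Rplus_le_compat_l, Rmult_le_compat_l; [lra|].
  exact noise_inside_ge.
Qed.

Lemma e_out1_noise_pos : 0 < e_out1 n n1 1 p1 c.
Proof.
  rewrite e_out1_eq, inter_size_1 by (simpl; lra).
  apply Rmult_lt_0_compat; apply Rmult_lt_0_compat; lra.
Qed.

Lemma e_out1_noise_lt : e_out1 n n1 1 p1 c < e_out1 n n1 n2 p1 p2.
Proof.
  rewrite !e_out1_eq, inter_size_1 by (simpl; lra).
  apply Rmult_lt_compat_l; [nra|].
  exact noise_outside_lt.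
Qed.

End NoiseVersusLayer2.

Theorem theorem8 (n n1 n2 : nat) (p1 p2 : R) :
  (4 <= n1)%nat -> (4 <= n2)%nat ->
  (2 * (n1 * n2) <= n)%nat ->
  1/20 <= p1 <= 1 -> 1/20 <= p2 <= 1 ->
  Q_layer1 n n1 n2 p1 p2 < Q_layer1 n n1 1 p1 (noise_prob n n2 p2).
Proof.
  intros n1_ge4 n2_ge4 n_ge [p1_ge p1_le1] [p2_ge _].
  apply Q_layer1_lt; [apply not_0_INR; lia | split | split].
  - apply e_in1_pos; lia || lra.
  - apply e_in1_le_noise; lia || lra.
  - apply e_out1_noise_pos; lia || lra.
  - apply e_out1_noise_lt; lia || lra.
Qed.
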